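(* Let $K$ be a distance-bound space-filling curve. Then $K$-light-first order is energy-bound. That is, for every constant $\Delta \ge 1$ there is a constant $C$ (depending only on $\Delta$ and $K$) such that for every rooted tree $T$ with $n$ vertices in which every vertex has at most $\Delta$ children, if $T$ is stored in $K$-light-first order, then $$\sum_{v \in T}\ \sum_{c \text{ child of } v} \mathrm{dist}(p_v, p_c) \le C\, n,$$ i.e. the total energy of every vertex sending one message to each of its children is $O(n)$.
   Context: Processors sit on the cells of a two-dimensional grid (large enough to hold the tree). Sending a message from a processor at $(x_1,y_1)$ to one at $(x_2,y_2)$ costs energy equal to the Manhattan distance $|x_1-x_2|+|y_1-y_2|$. A space-filling curve $K$ is an enumeration of the grid cells; the processor at the $i$-th cell of the enumeration is called the $i$-th processor, and $\mathrm{dist}(i,j)$ denotes the energy of sending a message from the $i$-th to the $j$-th processor. $K$ is distance-bound if there is a constant $c$ such that for all natural numbers $i, j$, $\mathrm{dist}(i, i+j) \le c\sqrt{j}$. Light-first order: each vertex $v$ of a rooted tree is stored in one processor, at position $p_v$ along $K$ (the root at the first position). For a vertex $v$ let $s(v)$ denote the number of vertices in the subtree rooted at $v$. A vertex $v$ with children indexed $c_1,\dots,c_d$ so that $s(c_1)\le s(c_2)\le \dots \le s(c_d)$ has its neighborhood in light-first order if each $c_i$ is stored at position $p_v + 1 + \sum_{j=1}^{i-1} s(c_j)$. The tree is stored in $K$-light-first order if every vertex has its neighborhood in light-first order. A light-first order is energy-bound if, for trees of degree bounded by a constant, the total energy of each vertex sending a message to all its children is $O(n)$, $n$ the number of vertices.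 *)

From Stdlib Require Import Reals.
From mathcomp Require Import all_boot all_order all_algebra all_fingroup.
Set Implicit Arguments. Unset Strict Implicit. Unset Printing Implicit Defensive.

(* Grid cells are points of Z^2 (mathcomp int); a space-filling curve is an
   enumeration K : nat -> int * int of grid cells (injective). *)
Definition curve := nat -> (int * int)%type.

Definition kdist (K : curve) (i j : nat) : nat :=
  (absz ((K i).1 - (K j).1)%R + absz ((K i).2 - (K j).2)%R)%N.

Definition distance_bound (K : curve) : Prop :=
  exists c : Rdefinitions.R, forall i j : nat, Rle (INR (kdist K i (i + j))) (Rmult c (sqrt (INR j))).

Inductive tree := Node of seq tree.
Definition children (t : tree) : seq tree := let: Node cs := t in cs.
Definition leaf := Node [::].

Fixpoint tree_size (t : tree) : nat :=
  let: Node cs := t in (sumn (map tree_size cs)).+1.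

(* Vertices are addressed by paths from the root: [::] is the root and
   rcons a i is the i-th child (in the list order) of vertex a. *)
Fixpoint subt (t : tree) (a : seq nat) : tree :=
  match a with
  | [::] => t
  | i :: a' => subt (nth leaf (children t) i) a'
  end.

Fixpoint valid (t : tree) (a : seq nat) : bool :=
  match a with
  | [::] => true
  | i :: a' => (i < size (children t)) && valid (nth leaf (children t) i) a'
  end.

Definition degree_le (t : tree) (D : nat) : Prop :=
  forall a, valid t a -> size (children (subt t a)) <= D.

Definition light_first (t : tree) (pos : seq nat -> nat) : Prop :=
  pos [::] = 0 /\
  forall a, valid t a ->
    let cs := children (subt t a) in
    exists sigma : {perm 'I_(size cs)},
      (forall i j : 'I_(size cs), i <= j ->
          tree_size (nth leaf cs (sigma i)) <= tree_size (nth leaf cs (sigma j))) /\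
      (forall i : 'I_(size cs),
          pos (rcons a (sigma i)) =
          (pos a + 1 + \sum_(j < size cs | j < i) tree_size (nth leaf cs (sigma j)))%N).

Fixpoint energy_at (K : curve) (pos : seq nat -> nat) (a : seq nat) (t : tree) : nat :=
  let: Node cs := t in
  (fix go (cs : seq tree) (i : nat) : nat :=
     match cs with
     | [::] => 0
     | c :: cs' => kdist K (pos a) (pos (rcons a i)) + energy_at K pos (rcons a i) c
                   + go cs' i.+1
     end) cs 0.

Definition energy (K : curve) (pos : seq nat -> nat) (t : tree) : nat :=
  energy_at K pos [::] t.

(* In light-first order a child of v sits at distance at most 1 + L_v from v
   along K, where L_v is the total size of all subtrees of v but the heaviest.
   Hence v pays at most D c sqrt (1 + L_v) to reach its (at most D) children.
   By induction on the tree, a subtree of size s then costs at most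
   c ((D + 2 D^2) s - 2 D^2 sqrt s): since the heaviest child M dominates,
   L <= D M, one has sqrt (M + L) <= sqrt M + sqrt L - sqrt L / (2 D), and this
   saving of D sqrt L in the potential pays for the messages sent by v. *)

From Stdlib Require Import Reals.
From mathcomp Require Import all_boot all_order all_algebra all_fingroup.
From mathcomp Require Import ring lra Rstruct.
Set Implicit Arguments.
Unset Strict Implicit.
Unset Printing Implicit Defensive.
Import Order.TTheory GRing.Theory Num.Theory.

Lemma tree_nth_ind (P : tree -> Prop) :
  (forall cs, (forall i, i < size cs -> P (nth leaf cs i)) -> P (Node cs)) ->
  forall t, P t.
Proof.
move=> IH; fix tree_nth_ind 1 => -[cs]; apply: IH.
(* [exfalso] stops [done] from closing a goal by the unguarded recursive call. *)
elim: cs => [|c cs IHcs] [|i] lt_i; try by exfalso.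
- exact: tree_nth_ind.
- exact: IHcs.
Qed.

Lemma indexed_rec_sum (T : Type) (x0 : T) (f : nat -> T -> nat) (g : seq T -> nat -> nat) :
  (forall i, g [::] i = 0) -> (forall x s i, g (x :: s) i = f i x + g s i.+1) ->
  forall s i, g s i = \sum_(j < size s) f (i + j) (nth x0 s j).
Proof.
move=> g_nil g_cons; elim=> [|x s IHs] i; first by rewrite g_nil big_ord0.
rewrite g_cons IHs big_ord_recl addn0; congr (_ + _).
by apply: eq_bigr => j _; rewrite addnS.
Qed.

(* The inner [fix] of [energy_at] is anonymous, so it is matched through its
   recursion equations by [indexed_rec_sum]. *)
Lemma energy_at_Node K pos a cs :
  energy_at K pos a (Node cs) =
  \sum_(i < size cs) (kdist K (pos a) (pos (rcons a i)) + energy_at K pos (rcons a i) (nth leaf cs i)).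
Proof.
by rewrite /= (@indexed_rec_sum _ leaf
  (fun i c => kdist K (pos a) (pos (rcons a i)) + energy_at K pos (rcons a i) c)).
Qed.

Lemma tree_size_Node cs :
  tree_size (Node cs) = (\sum_(i < size cs) tree_size (nth leaf cs i)).+1.
Proof. by rewrite /= sumnE big_map (big_nth leaf) big_mkord. Qed.

Lemma sum_but_max_le n (x : 'I_n -> nat) (h : 'I_n) :
  (forall i, x i <= x h) -> \sum_(i < n | i != h) x i <= n * x h.
Proof.
move=> le_h; apply: (@leq_trans (\sum_(i < n) x i)).
  by rewrite [X in _ <= X](bigD1 h) //= leq_addl.
by rewrite -[X in X * _]card_ord -sum_nat_const leq_sum.
Qed.

Definition light_first_at (pos : seq nat -> nat) (a : seq nat) (t : tree) : Prop :=
  let cs := children t in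
  exists sigma : {perm 'I_(size cs)},
    (forall i j : 'I_(size cs), i <= j ->
        tree_size (nth leaf cs (sigma i)) <= tree_size (nth leaf cs (sigma j))) /\
    (forall i : 'I_(size cs),
        pos (rcons a (sigma i)) =
        pos a + 1 + \sum_(j < size cs | j < i) tree_size (nth leaf cs (sigma j))).

Definition light_first_below (pos : seq nat -> nat) (a : seq nat) (t : tree) : Prop :=
  forall b, valid t b -> light_first_at pos (a ++ b) (subt t b).

Lemma light_first_below_root t pos : light_first t pos -> light_first_below pos [::] t.
Proof. by case=> _ lf b /lf. Qed.

Lemma light_first_below_child pos a cs i :
  light_first_below pos a (Node cs) -> i < size cs ->
  light_first_below pos (rcons a i) (nth leaf cs i).
Proof. by move=> lf lt_i b vb; rewrite cat_rcons; apply: (lf (i :: b)); rewrite /= lt_i. Qed.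

Lemma degree_le_child cs D i :
  degree_le (Node cs) D -> i < size cs -> degree_le (nth leaf cs i) D.
Proof. by move=> deg lt_i b vb; apply: (deg (i :: b)); rewrite /= lt_i. Qed.

Lemma light_first_heavy_child pos a cs :
  light_first_at pos a (Node cs) -> 0 < size cs ->
  exists2 h : 'I_(size cs),
    (forall i : 'I_(size cs), tree_size (nth leaf cs i) <= tree_size (nth leaf cs h)) &
    (forall i : 'I_(size cs),
       exists2 k, k <= \sum_(j < size cs | j != h) tree_size (nth leaf cs j)
                & pos (rcons a i) = pos a + 1 + k).
Proof.
move=> [sigma [sorted_sigma pos_sigma]] cs_gt0.
have last_lt : (size cs).-1 < size cs by rewrite ltn_predL.
pose last := Ordinal last_lt.
have le_last (j : 'I_(size cs)) : j <= last by rewrite /= -ltnS prednK.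
exists (sigma last) => i; first by rewrite -{1}(permKV sigma i) sorted_sigma.
rewrite -{1}(permKV sigma i) pos_sigma; eexists; last reflexivity.
rewrite [X in _ <= X](reindex_inj (@perm_inj _ sigma)) /=.
rewrite [X in _ <= X](bigID (fun j : 'I_(size cs) => j < (sigma^-1)%g i)) /=.
apply: leq_trans _ (leq_addr _ _).
apply/eq_leq/eq_bigl => j; rewrite (inj_eq perm_inj).
case lt_j: (j < _); rewrite ?andbT ?andbF //.
by rewrite neq_ltn (leq_trans lt_j (le_last _)).
Qed.

Local Open Scope ring_scope.

Section SqrtInequalities.
Variable R : rcfType.
Implicit Types a b x y : R.

Lemma sqrtr_le_of_sqr x y : 0 <= y -> x <= y ^+ 2 -> Num.sqrt x <= y.
Proof. by move=> y0 xy; rewrite -(ger0_norm y0) -sqrtr_sqr ler_wsqrtr. Qed.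

Lemma sqrtrD_le a b : 0 <= a -> 0 <= b -> Num.sqrt (a + b) <= Num.sqrt a + Num.sqrt b.
Proof.
move=> a0 b0; apply: sqrtr_le_of_sqr; first by rewrite addr_ge0 ?sqrtr_ge0.
rewrite sqrrD !sqr_sqrtr // mulr2n.
have := mulr_ge0 (sqrtr_ge0 a) (sqrtr_ge0 b); lra.
Qed.

Lemma sqrtrD_le_dominated (D M L : R) : 1 <= D -> 0 <= M -> 0 <= L -> L <= D * M ->
  Num.sqrt (M + L) <= Num.sqrt M + Num.sqrt L - Num.sqrt L / (2 * D).
Proof.
move=> D1 M0 L0 LDM; set u := Num.sqrt M; set v := Num.sqrt L.
have u0 : 0 <= u by exact: sqrtr_ge0.
have v0 : 0 <= v by exact: sqrtr_ge0.
have vDu : v <= D * u.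
  have : v ^+ 2 <= (D * u) ^+ 2 by rewrite sqr_sqrtr // exprMn sqr_sqrtr //; nra.
  by rewrite ler_pXn2r // ?nnegrE // mulr_ge0 //; lra.
set e := v / (2 * D).
have eD : e * (2 * D) = v by rewrite /e mulfVK //; lra.
have e0 : 0 <= e by rewrite /e divr_ge0 //; lra.
have ue : u * e <= u * v / 2.
  have : 0 <= u * e * (D - 1) by apply: mulr_ge0; [exact: mulr_ge0 | lra].
  rewrite -eD; lra.
have ve : v * e <= u * v / 2.
  have : 0 <= e * (D * u - v) by rewrite mulr_ge0 //; lra.
  rewrite -[in u * v]eD; lra.
apply: sqrtr_le_of_sqr; first nra.
rewrite -[M](sqr_sqrtr M0) -[L](sqr_sqrtr L0) -/u -/v; nra.
Qed.

Section Potential.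
Variables (c D : R).
Hypothesis c_ge0 : 0 <= c.

Definition potential (x : R) := c * ((D + 2 * D ^+ 2) * x - 2 * D ^+ 2 * Num.sqrt x).

Lemma potential_superadditive x y : 0 <= x -> 0 <= y ->
  potential x + potential y <= potential (x + y).
Proof.
move=> x0 y0; rewrite /potential -mulrDr ler_wpM2l //.
have B0 : 0 <= 2 * D ^+ 2 by rewrite mulr_ge0 ?sqr_ge0.
have := ler_wpM2l B0 (sqrtrD_le x0 y0); lra.
Qed.

Lemma potential_sum_le (I : Type) (r : seq I) (P : pred I) (F : I -> R) :
  (forall i, P i -> 0 <= F i) ->
  \sum_(i <- r | P i) potential (F i) <= potential (\sum_(i <- r | P i) F i).
Proof.
move=> F0.
suff [] : \sum_(i <- r | P i) potential (F i) <= potential (\sum_(i <- r | P i) F i)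
          /\ 0 <= \sum_(i <- r | P i) F i by [].
elim/big_ind2: _ => [|x y x' y' [yx x0] [y'x' x'0]|i /F0 Fi0].
- by rewrite /potential sqrtr0 !mulr0 subr0 mulr0.
- split; last exact: addr_ge0.
  exact: le_trans (lerD yx y'x') (potential_superadditive x0 x'0).
- by split.
Qed.

Lemma potential_le_linear x : potential x <= c * (D + 2 * D ^+ 2) * x.
Proof.
rewrite /potential -[_ * _ * x]mulrA ler_wpM2l // gerBl.
by rewrite mulr_ge0 ?sqrtr_ge0 // mulr_ge0 ?sqr_ge0.
Qed.

Lemma potential_node_step M L : 1 <= D -> 0 <= M -> 0 <= L -> L <= D * M ->
  D * (c * Num.sqrt (1 + L)) + potential M + potential L <= potential (1 + M + L).
Proof.
move=> D1 M0 L0 LDM; rewrite /potential.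
have h1 : Num.sqrt (1 + L) <= 1 + Num.sqrt L by rewrite -{2}sqrtr1 sqrtrD_le.
have h2 : Num.sqrt (1 + M + L) <= 1 + Num.sqrt (M + L).
  by rewrite -addrA -{2}sqrtr1 sqrtrD_le // addr_ge0.
have h3 := sqrtrD_le_dominated D1 M0 L0 LDM.
have gain : 2 * D ^+ 2 * (Num.sqrt L / (2 * D)) = D * Num.sqrt L.
  by field; lra.
have B0 : 0 <= 2 * D ^+ 2 by rewrite mulr_ge0 ?sqr_ge0.
have : D * Num.sqrt (1 + L) + 2 * D ^+ 2 * Num.sqrt (1 + M + L)
       <= D + 2 * D ^+ 2 + 2 * D ^+ 2 * (Num.sqrt M + Num.sqrt L).
  have D0 : 0 <= D by lra.
  have := ler_wpM2l D0 h1; have := ler_wpM2l B0 h2; have := ler_wpM2l B0 h3.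
  lra.
move=> /(ler_wpM2l c_ge0); lra.
Qed.
End Potential.

End SqrtInequalities.

Section EnergyBound.
Variables (R : rcfType) (K : curve) (c : R) (D : nat).
Hypotheses (c_ge0 : 0 <= c) (D_gt0 : (0 < D)%N).
Hypothesis K_dist : forall i j, (kdist K i (i + j))%:R <= c * Num.sqrt (j%:R : R).

Local Notation pot := (potential c D%:R).

Lemma energy_at_le_potential pos t a :
  degree_le t D -> light_first_below pos a t ->
  (energy_at K pos a t)%:R <= pot (tree_size t)%:R.
Proof.
elim/tree_nth_ind: t a => cs IH a deg lf.
have D1 : 1 <= D%:R :> R by rewrite ler1n.
rewrite energy_at_Node tree_size_Node.
have [cs0 | cs_gt0] := posnP (size cs).
  rewrite cs0 !big_ord0 /potential sqrtr1 mulr1; apply: mulr_ge0 => //; lra.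
have lf_root : light_first_at pos a (Node cs) by rewrite -[a]cats0; exact: lf [::] isT.
have [h heavy edge] := light_first_heavy_child lf_root cs_gt0.
set x := fun i : 'I_(size cs) => tree_size (nth leaf cs i).
set L := (\sum_(j < size cs | j != h) x j)%N.
have edge_le (i : 'I_(size cs)) :
    (kdist K (pos a) (pos (rcons a i)))%:R <= c * Num.sqrt (1 + L%:R).
  have [k k_le ->] := edge i; rewrite -addnA.
  apply: le_trans (K_dist _ _) _; rewrite ler_wpM2l // ler_wsqrtr //.
  by rewrite -natr1 addrC lerD2l ler_nat.
have child_le (i : 'I_(size cs)) :
    (energy_at K pos (rcons a i) (nth leaf cs i))%:R <= pot (x i)%:R.
  exact: IH (degree_le_child deg _) (light_first_below_child lf _).
have sum_sizes : (\sum_(i < size cs) tree_size (nth leaf cs i) = x h + L)%N.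
  by rewrite (bigD1 h).
have L_le : (L <= D * x h)%N.
  by rewrite (leq_trans (sum_but_max_le heavy)) // leq_mul2r (deg [::] isT) orbT.
have fan : c * Num.sqrt (1 + L%:R) *+ size cs <= D%:R * (c * Num.sqrt (1 + L%:R)).
  by rewrite -mulr_natl ler_wpM2r ?ler_nat ?(deg [::] isT) // mulr_ge0 ?sqrtr_ge0.
have light : \sum_(i < size cs | i != h) pot (x i)%:R <= pot L%:R.
  by rewrite natr_sum; apply: potential_sum_le => // i _; exact: ler0n.
have step : D%:R * (c * Num.sqrt (1 + L%:R)) + pot (x h)%:R + pot L%:R
             <= pot (1 + (x h)%:R + L%:R).
  by apply: potential_node_step; rewrite ?ler0n // -natrM ler_nat.
rewrite natr_sum; under eq_bigr do rewrite natrD.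
apply: le_trans (ler_sum _ (fun i _ => lerD (edge_le i) (child_le i))) _.
rewrite big_split /= sumr_const card_ord [X in _ + X <= _](bigD1 h) //= sum_sizes.
rewrite -add1n addnA !natrD; lra.
Qed.

End EnergyBound.

Theorem mainTheorem1 (K : curve) (Kinj : injective K) (HK : distance_bound K) :
  forall D : nat, (1 <= D)%N ->
  exists C : Rdefinitions.R,
    forall (t : tree) (pos : seq nat -> nat),
      degree_le t D -> light_first t pos ->
      Rle (INR (energy K pos t)) (Rmult C (INR (tree_size t))).
Proof.
move=> D D_gt0; have [c K_dist] := HK.
have K_distR i j : (kdist K i (i + j))%:R <= c * Num.sqrt j%:R.
  by rewrite -!INRE -RsqrtE; apply/RleP.
have c_ge0 : 0 <= c.
  by have := K_distR 0%N 1%N; rewrite sqrtr1 mulr1; apply: le_trans.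
exists (c * (D%:R + 2 * D%:R ^+ 2)) => t pos deg lf.
rewrite !INRE; apply/RleP.
apply: le_trans (potential_le_linear _ c_ge0 _).
exact: energy_at_le_potential c_ge0 D_gt0 K_distR _ _ _ deg (light_first_below_root lf).
Qed.
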